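(* Let $\widehat{A}=A+\epsilon B$ and $\widehat{C}=C+\epsilon D$ with $A,B,C,D\in\mathbb{R}^{n\times n}$ be such that the dual core generalized inverses of $\widehat{A}$, $\widehat{C}$ and $\widehat{A}\widehat{C}$ exist and have the particular form $\widehat{A}^{\oplus}=A^{\oplus}-\epsilon A^{\oplus}BA^{\oplus}$, $\widehat{C}^{\oplus}=C^{\oplus}-\epsilon C^{\oplus}DC^{\oplus}$, $(\widehat{A}\widehat{C})^{\oplus}=(AC)^{\oplus}-\epsilon (AC)^{\oplus}(AD+BC)(AC)^{\oplus}$. If $AC=CA$, $A^*C=CA^*$, $C^{\oplus}B=BC^{\oplus}$ and $A^{\oplus}D=DA^{\oplus}$, then $(\widehat{A}\widehat{C})^{\oplus}=\widehat{A}^{\oplus}\widehat{C}^{\oplus}=\widehat{C}^{\oplus}\widehat{A}^{\oplus}$.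
   Context: A dual number is $a+\epsilon b$ with $a,b\in\mathbb{R}$, where $\epsilon\neq 0$, $\epsilon^2=0$ and $\epsilon$ commutes with reals. A dual matrix is $A+\epsilon B$ with $A,B$ real; sums and products are computed formally using $\epsilon^2=0$, transposition is $(A+\epsilon B)^T=A^T+\epsilon B^T$, and equality means equality of real and dual parts. $A^*$ denotes the (conjugate) transpose of a real matrix. For a real square matrix $A$ of index at most $1$, $A^{\oplus}$ denotes its core inverse, the unique matrix $G$ with $AGA=A$, $AG^2=G$, $(AG)^T=AG$. For a square dual matrix $\widehat{A}$ of dual index $1$, the dual core generalized inverse (DCGI) $\widehat{A}^{\oplus}$ is the dual matrix $\widehat{X}$ (if it exists) with $\widehat{A}\widehat{X}\widehat{A}=\widehat{A}$, $\widehat{A}\widehat{X}^2=\widehat{X}$, $(\widehat{A}\widehat{X})^T=\widehat{A}\widehat{X}$. *)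

From HB Require Import structures.
From mathcomp Require Import all_boot all_order all_algebra.
From mathcomp Require Export reals.
Set Implicit Arguments. Unset Strict Implicit. Unset Printing Implicit Defensive.
Import GRing.Theory Num.Theory.
Local Open Scope ring_scope.

Definition is_core_inverse (R : realType) (n : nat) (A G : 'M[R]_n) : Prop :=
  [/\ A *m G *m A = A, A *m (G *m G) = G & (A *m G)^T = A *m G].

(* Dual matrices  P + eps Q  with eps^2 = 0. *)
Record dmat (R : realType) (n : nat) := DMat { dre : 'M[R]_n; ddu : 'M[R]_n }.

Definition dmul (R : realType) (n : nat) (X Y : dmat R n) : dmat R n :=
  DMat (dre X *m dre Y) (dre X *m ddu Y + ddu X *m dre Y).

Definition dtr (R : realType) (n : nat) (X : dmat R n) : dmat R n :=
  DMat (dre X)^T (ddu X)^T.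

Definition is_dcgi (R : realType) (n : nat) (Ah X : dmat R n) : Prop :=
  [/\ dmul (dmul Ah X) Ah = Ah, dmul Ah (dmul X X) = X
    & dtr (dmul Ah X) = dmul Ah X].

From HB Require Import structures.
From mathcomp Require Import all_boot all_order all_algebra.
From mathcomp Require Import reals.
Import GRing.Theory Num.Theory.
Local Open Scope ring_scope.

(* A matrix A with core inverse G has index at most one: A = A A (G G A), so
   rank (A A) = rank A and A (A V) = 0 forces A V = 0.  With this cancellation
   the core inverse is unique, and it commutes with every C that commutes with
   A and A^T, because A G is the orthogonal projector onto the C- and
   C^T-invariant range of A.  Under AC = CA and A^T C = C A^T the matrices
   A, C, A^⊕, C^⊕ therefore commute as needed for A^⊕ C^⊕ to be the core
   inverse of AC; the dual parts then follow from C^⊕ B = B C^⊕ and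
   A^⊕ D = D A^⊕ by moving factors past each other. *)

Lemma comm_mx_mulCA {R : pzRingType} {n : nat} {U V Y : 'M[R]_n} :
  comm_mx U V -> U *m (V *m Y) = V *m (U *m Y).
Proof. by move=> UV; rewrite !mulmxA UV. Qed.

Lemma sym_stable_comm (R : comPzRingType) (n : nat) (P M : 'M[R]_n) :
  P^T = P -> P *m M *m P = M *m P -> P *m M^T *m P = M^T *m P ->
  comm_mx P M.
Proof.
move=> PT PMP PMTP; rewrite /comm_mx; have := congr1 trmx PMTP.
by rewrite !trmx_mul trmxK PT mulmxA PMP => <-.
Qed.

Section CoreInverse.

Set Implicit Arguments.
Unset Strict Implicit.

Variables (R : realType) (n : nat) (A G : 'M[R]_n).
Hypothesis core : is_core_inverse A G.

Lemma core_mulAGA (Y : 'M[R]_n) : A *m (G *m (A *m Y)) = A *m Y.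
Proof. by have [AGA _ _] := core; rewrite !mulmxA AGA. Qed.

Lemma core_mulAGG (Y : 'M[R]_n) : A *m (G *m (G *m Y)) = G *m Y.
Proof. by have [_ AGG _] := core; rewrite (mulmxA G) mulmxA AGG. Qed.

Lemma core_row_sqr : (A <= A *m A)%MS.
Proof.
have [AGA AGG _] := core.
have A_AAGGA : A = A *m A *m (G *m G *m A).
  by rewrite -{1}AGA -{1}AGG !mulmxA.
have [_ <-] := mxrank_leqif_sup (submxMl A A).
by rewrite eqn_leq mxrankM_maxl {1}A_AAGGA mxrankM_maxl.
Qed.

Lemma core_cancel (V : 'M[R]_n) : A *m (A *m V) = 0 -> A *m V = 0.
Proof.
by move=> AAV; have [Y ->] := submxP core_row_sqr; rewrite -!mulmxA AAV mulmx0.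
Qed.

Lemma core_mulKA : G *m A *m A = A.
Proof.
have [AGA _ _] := core.
apply/eqP; rewrite -subr_eq0; apply/eqP.
have -> : G *m A *m A - A = A *m (G *m (G *m (A *m A)) - G *m A).
  by rewrite mulmxBr core_mulAGG [A *m (G *m A)]mulmxA AGA mulmxA.
apply: core_cancel.
by rewrite !mulmxBr core_mulAGG core_mulAGA [A *m (G *m A)]mulmxA AGA subrr.
Qed.

Lemma core_mulKV : G *m A *m G = G.
Proof.
by have [_ AGG _] := core; rewrite -{2}AGG !mulmxA core_mulKA -mulmxA AGG.
Qed.

Lemma core_mulGAG (Y : 'M[R]_n) : G *m (A *m (G *m Y)) = G *m Y.
Proof. by rewrite !mulmxA core_mulKV. Qed.

Lemma core_comm (C : 'M[R]_n) :
  comm_mx A C -> comm_mx A^T C -> comm_mx G C.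
Proof.
move=> AC ATC; have [_ AGG PT] := core.
have PMP M : comm_mx A M -> A *m G *m M *m (A *m G) = M *m (A *m G).
  move=> AM; rewrite -!mulmxA -(comm_mx_mulCA AM) core_mulAGA.
  by rewrite (comm_mx_mulCA AM).
have CTA : comm_mx A C^T by rewrite /comm_mx -[A]trmxK -!trmx_mul ATC.
have PC : comm_mx (A *m G) C by apply: sym_stable_comm; rewrite ?PMP.
apply/eqP; rewrite -subr_eq0; apply/eqP.
have -> : G *m C - C *m G = A *m (G *m (G *m C) - C *m (G *m G)).
  by rewrite mulmxBr core_mulAGG (comm_mx_mulCA AC) AGG.
apply: core_cancel.
by rewrite !mulmxBr core_mulAGG (comm_mx_mulCA AC) AGG [A *m (G *m C)]mulmxA PC
  (comm_mx_mulCA AC) subrr.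
Qed.

Lemma core_uniq (G' : 'M[R]_n) : is_core_inverse A G' -> G' = G.
Proof.
have [AGA AGG PT] := core; case=> AG'A AG'G' P'T.
have P'P : A *m G' = A *m G.
  have AG_AG'AG : A *m G = A *m G' *m (A *m G) by rewrite mulmxA AG'A.
  by rewrite -PT AG_AG'AG trmx_mul PT P'T mulmxA AGA.
apply/eqP; rewrite -subr_eq0; apply/eqP.
have -> : G' - G = A *m (G' *m G' - G *m G) by rewrite mulmxBr AG'G' AGG.
by apply: core_cancel; rewrite mulmxBr AG'G' AGG mulmxBr P'P subrr.
Qed.

End CoreInverse.

Definition dcore_inv (R : realType) (n : nat) (G B : 'M[R]_n) : dmat R n :=
  DMat G (- (G *m B *m G)).

Section CoreInverseMul.

Set Implicit Arguments.
Unset Strict Implicit.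

Variables (R : realType) (n : nat) (A B C D GA GC : 'M[R]_n).
Hypotheses (coreA : is_core_inverse A GA) (coreC : is_core_inverse C GC).
Hypotheses (AC : comm_mx A C) (ATC : comm_mx A^T C).

Lemma comm_GA_C : comm_mx GA C.
Proof. exact: (core_comm coreA). Qed.

Lemma comm_GC_A : comm_mx GC A.
Proof.
apply: (core_comm coreC (comm_mx_sym AC)).
by rewrite /comm_mx -[A]trmxK -!trmx_mul ATC.
Qed.

Lemma comm_GA_GC : comm_mx GA GC.
Proof.
apply: (core_comm coreA (comm_mx_sym comm_GC_A)).
apply/comm_mx_sym/(core_comm coreC (comm_mx_sym ATC)).
by rewrite /comm_mx -!trmx_mul AC.
Qed.

Lemma core_mul : is_core_inverse (A *m C) (GA *m GC).
Proof.
have [CGC CGG PC] := coreC.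
split.
- rewrite -!mulmxA -(comm_mx_mulCA comm_GA_C) (comm_mx_mulCA comm_GC_A).
  by rewrite -(comm_mx_mulCA AC) core_mulAGA // [C *m (GC *m C)]mulmxA CGC.
- rewrite -!mulmxA -(comm_mx_mulCA comm_GA_GC) -!(comm_mx_mulCA comm_GA_C).
  by rewrite core_mulAGG // CGG.
- have [_ _ PA] := coreA.
  have -> : A *m C *m (GA *m GC) = A *m GA *m (C *m GC).
    by rewrite -!mulmxA -(comm_mx_mulCA comm_GA_C).
  have PAPC : comm_mx (A *m GA) (C *m GC).
    rewrite /comm_mx -!mulmxA (comm_mx_mulCA comm_GA_C) (comm_mx_mulCA AC).
    by rewrite (comm_mx_mulCA comm_GC_A) comm_GA_GC.
  by rewrite trmx_mul PA PC PAPC.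
Qed.

Hypotheses (GCB : comm_mx GC B) (GAD : comm_mx GA D).

Lemma dmul_dcore_inv :
  dmul (dcore_inv GA B) (dcore_inv GC D)
  = dcore_inv (GA *m GC) (A *m D + B *m C).
Proof.
have GAGC_AD : GA *m GC *m (A *m D) *m (GA *m GC) = GA *m (GC *m D *m GC).
  rewrite -!mulmxA (comm_mx_mulCA comm_GC_A) -(comm_mx_mulCA GAD).
  by rewrite -(comm_mx_mulCA comm_GA_GC) core_mulGAG.
have GAGC_BC : GA *m GC *m (B *m C) *m (GA *m GC) = GA *m B *m GA *m GC.
  rewrite -!mulmxA (comm_mx_mulCA GCB) -(comm_mx_mulCA comm_GA_C).
  by rewrite -(comm_mx_mulCA comm_GA_GC) [GC *m (C *m GC)]mulmxA core_mulKV.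
rewrite /dmul /dcore_inv /=; congr DMat.
by rewrite mulmxDr mulmxDl GAGC_AD GAGC_BC mulmxN mulNmx opprD.
Qed.

Lemma dcore_inv_mulC :
  dmul (dcore_inv GA B) (dcore_inv GC D) = dmul (dcore_inv GC D) (dcore_inv GA B).
Proof.
rewrite /dmul /dcore_inv /=; congr DMat; first exact: comm_GA_GC.
rewrite !mulmxN !mulNmx addrC; congr (- _ + - _).
  by rewrite -!mulmxA -(comm_mx_mulCA comm_GA_GC) (comm_mx_mulCA GCB) comm_GA_GC.
by rewrite -!mulmxA (comm_mx_mulCA comm_GA_GC) (comm_mx_mulCA GAD) comm_GA_GC.
Qed.

End CoreInverseMul.

Theorem mainTheorem9 (R : realType) (n : nat) (A B C D GA GC GAC : 'M[R]_n) :
  is_core_inverse A GA ->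
  is_core_inverse C GC ->
  is_core_inverse (A *m C) GAC ->
  is_dcgi (DMat A B) (DMat GA (- (GA *m B *m GA))) ->
  is_dcgi (DMat C D) (DMat GC (- (GC *m D *m GC))) ->
  is_dcgi (dmul (DMat A B) (DMat C D))
          (DMat GAC (- (GAC *m (A *m D + B *m C) *m GAC))) ->
  A *m C = C *m A ->
  A^T *m C = C *m A^T ->
  GC *m B = B *m GC ->
  GA *m D = D *m GA ->
  DMat GAC (- (GAC *m (A *m D + B *m C) *m GAC))
    = dmul (DMat GA (- (GA *m B *m GA))) (DMat GC (- (GC *m D *m GC)))
  /\ dmul (DMat GA (- (GA *m B *m GA))) (DMat GC (- (GC *m D *m GC)))
    = dmul (DMat GC (- (GC *m D *m GC))) (DMat GA (- (GA *m B *m GA))).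
Proof.
move=> coreA coreC coreAC _ _ _ AC ATC GCB GAD.
have -> : GAC = GA *m GC := core_uniq (core_mul coreA coreC AC ATC) coreAC.
split; first by rewrite (dmul_dcore_inv coreA coreC AC ATC GCB GAD).
exact: (dcore_inv_mulC coreA coreC AC ATC GCB GAD).
Qed.
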